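(* Let $m\ge 2$ and let $C_1,\dots,C_m\subset\mathbb{R}^n$ be nonempty, closed, convex, pairwise disjoint sets, and assume either all $C_i$ are bounded, or for every $j$ with $C_j$ unbounded and every sequence $(a^{(k)})\subset C_j$ with $\|a^{(k)}\|\to\infty$, at least one of $d_{C_{j-1}}(a^{(k)})\to\infty$, $d_{C_{j+1}}(a^{(k)})\to\infty$ holds (cyclic indices). Let $D(a)=\sum_{i=1}^m\|a_i-a_{i+1}\|$ ($a_{m+1}=a_1$). Let $a_i^{(0)}\in C_i$ and let $(\alpha_k)$ be positive step sizes with $\sum_k\alpha_k=\infty$ and $\sum_k\alpha_k^2<\infty$. Define iteratively, for $i=1,\dots,m$, $$g_i^{(k)}=\frac{a_i^{(k)}-a_{i-1}^{(k)}}{\|a_i^{(k)}-a_{i-1}^{(k)}\|}+\frac{a_i^{(k)}-a_{i+1}^{(k)}}{\|a_i^{(k)}-a_{i+1}^{(k)}\|},\qquad a_i^{(k+1)}=\operatorname{proj}_{C_i}\big(a_i^{(k)}-\alpha_k g_i^{(k)}\big),$$ with cyclic indices $a_0^{(k)}=a_m^{(k)}$, $a_{m+1}^{(k)}=a_1^{(k)}$. Then the sequence $(a_1^{(k)},\dots,a_m^{(k)})$ converges to an optimal solution $(a_1^*,\dots,a_m^* )$ of $\min_{a\in C_1\times\cdots\times C_m}D(a)$, and $D(a_1^{(k)},\dots,a_m^{(k)})$ converges to the optimal value $D^*=\min_{a\in C}D(a)$.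
   Context: $\operatorname{proj}_K(x)$ denotes the (unique) Euclidean projection of $x$ onto a nonempty closed convex set $K$, i.e. the point of $K$ nearest to $x$. $d_K(x)=\inf_{y\in K}\|x-y\|$. The vector $g_i^{(k)}$ is well defined because consecutive iterates lie in disjoint sets. *)

(* Points of R^n are row vectors 'rV[R]_n
   over an arbitrary R : realType; the Euclidean norm is defined explicitly
   (the library's norm on 'rV is the max norm, which induces the same
   topology, so the library's `closed` and `-->` are the Euclidean notions). *)
From HB Require Import structures.
From mathcomp Require Import all_boot all_order all_algebra.
From mathcomp Require Import all_classical all_reals all_analysis.
Set Implicit Arguments. Unset Strict Implicit. Unset Printing Implicit Defensive.
Import Order.TTheory GRing.Theory Num.Theory.
Import numFieldNormedType.Exports.
Local Open Scope classical_set_scope.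
Local Open Scope ring_scope.

Definition enorm (R : realType) (n : nat) (v : 'rV[R]_n) : R :=
  Num.sqrt (\sum_(j < n) v ord0 j ^+ 2).

Definition ebounded (R : realType) (n : nat) (K : set 'rV[R]_n) : Prop :=
  exists M : R, forall x, K x -> enorm x <= M.

Definition dist_set (R : realType) (n : nat) (K : set 'rV[R]_n) (x : 'rV[R]_n) : R :=
  inf [set enorm (x - y) | y in K].

Definition is_proj (R : realType) (n : nat) (K : set 'rV[R]_n) (x p : 'rV[R]_n)
  : Prop := K p /\ forall y, K y -> enorm (x - p) <= enorm (x - y).

Definition Dobj (R : realType) (n m : nat) (a : 'I_m -> 'rV[R]_n) : R :=
  \sum_(i < m) enorm (a i - a (ordS i)).

Definition gdir (R : realType) (n m : nat) (a : 'I_m -> 'rV[R]_n) (i : 'I_m)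
  : 'rV[R]_n :=
  (enorm (a i - a (ord_pred i)))^-1 *: (a i - a (ord_pred i)) +
  (enorm (a i - a (ordS i)))^-1 *: (a i - a (ordS i)).

From HB Require Import structures.
From mathcomp Require Import all_boot all_order all_algebra.
From mathcomp Require Import all_classical all_reals all_analysis.
From mathcomp Require Import ring lra zify.
Set Implicit Arguments. Unset Strict Implicit. Unset Printing Implicit Defensive.
Import Order.TTheory GRing.Theory Num.Theory.
Import numFieldNormedType.Exports.
Local Open Scope classical_set_scope.
Local Open Scope ring_scope.

(* The iteration is a projected subgradient method for the convex function [Dobj] on
   [C_1 x ... x C_m]: disjointness keeps consecutive points apart, so [gdir] is a genuine
   subgradient with [|g_i| <= 2], and nonexpansiveness of the projections gives, for every
   feasible [b],
     |a^(k+1) - b|^2 <= |a^(k) - b|^2 - 2 alpha_k (D(a^(k)) - D(b)) + 4 m alpha_k^2.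
   Coercivity yields an optimal [b]. With it, the inequality bounds the iterates and, as
   [sum alpha_k = +oo] while [sum alpha_k^2 < +oo], forces [D(a^(k))] below [D(b) + e]
   infinitely often; a cluster point [a*] of those iterates is optimal. Applied to [b = a*],
   the inequality is quasi-Fejer: once [|a^(k) - a*|] and [sum_(j >= k) alpha_j^2] are small,
   [|a^(N) - a*|] stays small for all [N >= k], so the whole sequence converges to [a*]. *)

Section Euclidean.
Variables (R : realType) (n : nat).
Implicit Types (u v w x y p : 'rV[R]_n) (K : set 'rV[R]_n).

Definition dot u v : R := \sum_(j < n) u ord0 j * v ord0 j.

Lemma dotC u v : dot u v = dot v u.
Proof. by apply: eq_bigr => j _; rewrite mulrC. Qed.

Lemma dotDl u v w : dot (u + v) w = dot u w + dot v w.
Proof. by rewrite /dot -big_split; apply: eq_bigr => j _; rewrite !mxE mulrDl. Qed.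

Lemma dotNl u v : dot (- u) v = - dot u v.
Proof. by rewrite /dot -sumrN; apply: eq_bigr => j _; rewrite !mxE mulNr. Qed.

Lemma dotZl (c : R) u v : dot (c *: u) v = c * dot u v.
Proof. by rewrite /dot mulr_sumr; apply: eq_bigr => j _; rewrite !mxE mulrA. Qed.

Lemma dotBl u v w : dot (u - v) w = dot u w - dot v w.
Proof. by rewrite dotDl dotNl. Qed.

Lemma dotDr u v w : dot w (u + v) = dot w u + dot w v.
Proof. by rewrite dotC dotDl !(dotC w). Qed.

Lemma dotBr u v w : dot w (u - v) = dot w u - dot w v.
Proof. by rewrite dotC dotBl !(dotC w). Qed.

Lemma dotZr (c : R) u v : dot v (c *: u) = c * dot v u.
Proof. by rewrite dotC dotZl dotC. Qed.

Lemma dot0l v : dot 0 v = 0.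
Proof. by rewrite /dot big1 // => j _; rewrite mxE mul0r. Qed.

Lemma dotxx_ge0 u : 0 <= dot u u.
Proof. by apply: sumr_ge0 => j _; rewrite -expr2 sqr_ge0. Qed.

Lemma dotxx_eq0 u : dot u u = 0 -> u = 0.
Proof.
move=> /eqP; rewrite psumr_eq0; last by move=> j _; rewrite -expr2 sqr_ge0.
move=> /allP u0; apply/rowP => j; rewrite mxE.
by have := u0 j (mem_index_enum j); rewrite /= mulf_eq0 orbb => /eqP.
Qed.

Lemma dot_subZ u v (c : R) :
  dot (u - c *: v) (u - c *: v) = dot u u - 2 * c * dot v u + c ^+ 2 * dot v v.
Proof. rewrite dotBl !dotBr !dotZl !dotZr (dotC u v); ring. Qed.

Lemma enormE u : enorm u = Num.sqrt (dot u u).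
Proof.
by rewrite /enorm /dot; congr Num.sqrt; apply: eq_bigr => j _; rewrite expr2.
Qed.

Lemma enorm_ge0 u : 0 <= enorm u.
Proof. exact: sqrtr_ge0. Qed.

Lemma enorm_sqr u : enorm u ^+ 2 = dot u u.
Proof. by rewrite enormE sqr_sqrtr // dotxx_ge0. Qed.

Lemma enorm_gt0 v : v != 0 -> 0 < enorm v.
Proof.
move=> v0; rewrite enormE sqrtr_gt0 lt_neqAle dotxx_ge0 andbT.
by apply: contra v0 => /eqP /esym /dotxx_eq0 ->.
Qed.

Lemma enormN u : enorm (- u) = enorm u.
Proof. by rewrite !enormE dotNl dotC dotNl opprK. Qed.

Lemma enorm_distC u v : enorm (u - v) = enorm (v - u).
Proof. by rewrite -enormN opprB. Qed.

Lemma ler_enorm_sqr u v : enorm u <= enorm v -> dot u u <= dot v v.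
Proof. by move=> uv; rewrite -!enorm_sqr lerXn2r ?nnegrE ?enorm_ge0. Qed.

Lemma cauchy_schwarz u v : dot u v <= enorm u * enorm v.
Proof.
have [/dotxx_eq0 ->|u0] := eqVneq (dot u u) 0.
  by rewrite dot0l mulr_ge0 // enorm_ge0.
have [/dotxx_eq0 ->|v0] := eqVneq (dot v v) 0.
  by rewrite dotC dot0l mulr_ge0 // enorm_ge0.
set s := enorm u; set t := enorm v.
have s0 : 0 < s by rewrite /s enormE sqrtr_gt0 lt_neqAle eq_sym u0 dotxx_ge0.
have t0 : 0 < t by rewrite /t enormE sqrtr_gt0 lt_neqAle eq_sym v0 dotxx_ge0.
have := dotxx_ge0 (t *: u - s *: v).
rewrite !(dotBl, dotBr, dotZl, dotZr) -!enorm_sqr -/s -/t (dotC v u) => st.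
have : 2 * (s * t) * dot u v <= 2 * (s * t) * (s * t) by nra.
by rewrite ler_pM2l // mulr_gt0 // mulr_gt0.
Qed.

Lemma ler_enormD u v : enorm (u + v) <= enorm u + enorm v.
Proof.
rewrite -(ler_pXn2r (_ : (0 < 2)%N)) ?nnegrE ?addr_ge0 ?enorm_ge0 //.
rewrite enorm_sqr dotDl !dotDr (dotC v u) -!enorm_sqr.
have := cauchy_schwarz u v; nra.
Qed.

Lemma ler_enorm_dist u v : `|enorm u - enorm v| <= enorm (u - v).
Proof.
rewrite ler_norml; apply/andP; split.
  by have := ler_enormD (v - u) u; rewrite subrK enorm_distC; lra.
by have := ler_enormD (u - v) v; rewrite subrK; lra.
Qed.

Lemma coord_le_enorm u j : `|u ord0 j| <= enorm u.
Proof.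
rewrite -(ler_pXn2r (_ : (0 < 2)%N)) ?nnegrE ?enorm_ge0 //.
rewrite enorm_sqr /dot (bigD1 j) //= real_normK ?num_real // -expr2 lerDl.
by apply: sumr_ge0 => i _; rewrite -expr2 sqr_ge0.
Qed.

Lemma mx_norm_le_enorm u : `|u| <= enorm u.
Proof.
rewrite [`|u|]mx_normrE; apply/bigmax_leP; split; first exact: enorm_ge0.
by move=> [i j] _ /=; rewrite (ord1 i); exact: coord_le_enorm.
Qed.

Definition unitv v := (enorm v)^-1 *: v.

Lemma dot_unitv v : v != 0 -> dot (unitv v) v = enorm v.
Proof.
move=> v0; rewrite dotZl -enorm_sqr expr2 mulrA mulVf ?mul1r //.
by rewrite gt_eqF // enorm_gt0.
Qed.

Lemma dot_unitvv v : v != 0 -> dot (unitv v) (unitv v) = 1.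
Proof. by move=> v0; rewrite dotZr dot_unitv // mulVf // gt_eqF // enorm_gt0. Qed.

Lemma dot_unitv_le v w : v != 0 -> dot (unitv v) w <= enorm w.
Proof.
move=> v0; apply: le_trans (cauchy_schwarz _ _) _.
by rewrite enormE dot_unitvv // sqrtr1 mul1r.
Qed.

Lemma dist_set_le K x y : K y -> dist_set K x <= enorm (x - y).
Proof.
move=> Ky; apply: ge_inf; last by exists y.
by exists 0 => _ [z _ <-]; exact: enorm_ge0.
Qed.

Section Projection.
Local Open Scope convex_scope.

(* Comparing [x] with the points [p + t (y - p)] of [K] gives [2 (x - p).(y - p) <= t |y - p|^2]
   for every [t] in (0, 1]; take [t] small. *)
Lemma is_proj_obtuse K x p y : convex_set K -> is_proj K x p -> K y ->
  dot (x - p) (y - p) <= 0.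
Proof.
move=> cK [Kp p_min] Ky.
set d := dot (x - p) (y - p); set c := dot (y - p) (y - p).
have segment t (t0 : 0 <= t) (t1 : t <= 1) : 0 < t -> 2 * d <= t * c.
  move=> tp; set z := (y : convex_lmodType _) <| Itv01 t0 t1 |> p.
  have Kz : K z by have := cK y p (Itv01 t0 t1) (mem_set Ky) (mem_set Kp); rewrite inE.
  have xz : x - z = (x - p) - t *: (y - p).
    rewrite /z /conv /= /unstable.onem scalerBl scale1r scalerBr.
    by rewrite !opprD !opprK !addrA (addrAC x (- (t *: y))).
  move/ler_enorm_sqr: (p_min z Kz); rewrite xz dot_subZ.
  have -> : dot (y - p) (x - p) = d by rewrite dotC.
  rewrite -/c => le_xp; have : 0 <= t * (t * c - 2 * d) by nra.
  by rewrite pmulr_rge0 // subr_ge0.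
rewrite leNgt; apply/negP => d0.
have c0 : 0 <= c := dotxx_ge0 _.
have t0 : 0 <= d / (c + d + 1) by rewrite divr_ge0 //; lra.
have t1 : d / (c + d + 1) <= 1 by rewrite ler_pdivrMr ?mul1r; lra.
have := segment _ t0 t1; rewrite divr_gt0 //; last by lra.
move=> /(_ isT); rewrite mulrAC ler_pdivlMr; last by lra.
nra.
Qed.

End Projection.

Lemma is_proj_contract K x p y : convex_set K -> is_proj K x p -> K y ->
  dot (p - y) (p - y) <= dot (x - y) (x - y).
Proof.
move=> cK px Ky; have := is_proj_obtuse cK px Ky; have := dotxx_ge0 (x - p).
rewrite !(dotBl, dotBr) ?(dotC p x) ?(dotC y x) ?(dotC y p); lra.
Qed.

End Euclidean.

Lemma leq_increasing_seq (f : nat -> nat) : increasing_seq f -> forall l, (l <= f l)%N.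
Proof.
move=> f_incr; elim=> // l IH.
have : (f l.+1 <= f l)%N = false by have := f_incr l.+1 l; rewrite ltnn => <-.
lia.
Qed.

Lemma increasing_seq_comp (f g : nat -> nat) :
  increasing_seq f -> increasing_seq g -> increasing_seq (f \o g).
Proof. by move=> f_incr g_incr x y /=; rewrite [LHS]f_incr; exact: g_incr. Qed.

Lemma cvgn_geq (f : nat -> nat) : (forall k, (k <= f k)%N) -> f @ \oo --> \oo.
Proof.
move=> f_ge A [N _ NA]; exists N => // k /= Nk.
exact/NA/(leq_trans Nk (f_ge k)).
Qed.

Lemma not_ubounded_cvgry_comp (R : realType) (u : nat -> R) :
  ~ (exists M, forall l, u l <= M) -> exists psi : nat -> nat, (u \o psi) @ \oo --> +oo.
Proof.
move=> u_unbounded.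
have /choice [psi psiP] : forall N : nat, exists l, N%:R < u l.
  move=> N; apply: contrapT => noN; apply: u_unbounded.
  by exists N%:R => l; rewrite leNgt; apply/negP => lt_u; apply: noN; exists l.
exists psi; apply/cvgryPge => A.
exists (Num.Def.archi_bound `|A|) => // N /= AN.
have := archi_boundP (normr_ge0 A); have := psiP N; have := ler_norm A.
have : (Num.Def.archi_bound `|A|)%:R <= N%:R :> R by rewrite ler_nat.
lra.
Qed.

Lemma bolzano_weierstrass_seq (R : realType) (T : eqType) (c : nat -> T -> R) (s : seq T) :
  (forall p, exists M, forall l, `|c l p| <= M) ->
  exists f : nat -> nat, increasing_seq f /\ forall p, p \in s -> cvgn (fun l => c (f l) p).
Proof.
move=> c_bounded; elim: s => [|p s [f [f_incr f_cvg]]]; first by exists id.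
have [M HM] := c_bounded p.
have bf : bounded_fun (fun l => c (f l) p).
  apply/ex_bound; first exact: (@globally_properfilter _ _ 0%N).
  by exists M => l _; exact: HM.
have [g g_incr g_cvg] := bolzano_weierstrass bf.
exists (f \o g); split; first exact: increasing_seq_comp.
move=> q; rewrite inE => /orP [/eqP ->|qs]; first exact: g_cvg.
have /cvg_ex [L HL] := f_cvg q qs.
apply/cvg_ex; exists L; apply: cvg_comp HL.
exact/cvgn_geq/leq_increasing_seq.
Qed.

Section CyclicObjective.
Variables (R : realType) (n m : nat).
Implicit Types (x y b : 'I_m -> 'rV[R]_n) (c : nat -> 'I_m -> 'rV[R]_n).

Lemma ordS_neq (i : 'I_m) : (1 < m)%N -> ordS i != i.
Proof.
move=> m_gt1; apply/eqP => /(congr1 val) /=; case: i => i /= im.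
have [e|ne] := eqVneq i.+1 m; first by rewrite e modnn; lia.
by rewrite modn_small; lia.
Qed.

Lemma ord_pred_neq (i : 'I_m) : (1 < m)%N -> ord_pred i != i.
Proof.
by move=> m_gt1; apply/eqP => ei; have := ordS_neq (ord_pred i) m_gt1; rewrite ord_predK ei eqxx.
Qed.

Lemma gdirE x i :
  gdir x i = unitv (x i - x (ordS i)) - unitv (x (ord_pred i) - x (ordS (ord_pred i))).
Proof.
rewrite /gdir ord_predK [LHS]addrC; congr (_ + _).
by rewrite /unitv -scalerN opprB enorm_distC.
Qed.

Lemma enorm_le_Dobj x i : enorm (x i - x (ordS i)) <= Dobj x.
Proof.
by rewrite /Dobj (bigD1 i) //= lerDl; apply: sumr_ge0 => k _; exact: enorm_ge0.
Qed.

Lemma Dobj_ge0 x : 0 <= Dobj x.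
Proof. by apply: sumr_ge0 => i _; exact: enorm_ge0. Qed.

(* Summation by parts turns [sum_i g_i . (x_i - b_i)] into [sum_i u_i . (d_i(x) - d_i(b))]
   with [u_i] the unit vector along [d_i(x) = x_i - x_(i+1)], and [u_i . d_i(x) = |d_i(x)|]
   while [u_i . d_i(b) <= |d_i(b)|]. *)
Lemma Dobj_subgradient x b : (forall i, x i - x (ordS i) != 0) ->
  Dobj x - Dobj b <= \sum_i dot (gdir x i) (x i - b i).
Proof.
move=> x_neq.
pose u i := unitv (x i - x (ordS i)).
have -> : \sum_i dot (gdir x i) (x i - b i) =
    \sum_i dot (u i) ((x i - b i) - (x (ordS i) - b (ordS i))).
  under eq_bigr do rewrite gdirE dotBl.
  rewrite sumrB; under [in RHS]eq_bigr do rewrite dotBr.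
  rewrite sumrB; congr (_ - _).
  by rewrite (reindex_inj (@ordS_inj m)); apply: eq_bigr => i _; rewrite /= ordSK.
rewrite /Dobj -sumrB; apply: ler_sum => i _.
have -> : x i - b i - (x (ordS i) - b (ordS i)) = (x i - x (ordS i)) - (b i - b (ordS i)).
  by rewrite !opprD !opprK addrACA.
by rewrite dotBr dot_unitv ?x_neq // lerB // dot_unitv_le.
Qed.

Lemma dot_gdir_le4 x i : x i - x (ordS i) != 0 -> x i - x (ord_pred i) != 0 ->
  dot (gdir x i) (gdir x i) <= 4.
Proof.
move=> neqS neqP; rewrite /gdir -!/(unitv _).
have := dot_unitv_le (unitv (x i - x (ordS i))) neqP.
rewrite enormE dot_unitvv // sqrtr1 !(dotDl, dotDr) !dot_unitvv //.
rewrite (dotC (unitv (x i - x (ordS i)))); lra.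
Qed.

Definition sqdist x y : R := \sum_i dot (x i - y i) (x i - y i).

Lemma sqdist_ge0 x y : 0 <= sqdist x y.
Proof. by apply: sumr_ge0 => i _; exact: dotxx_ge0. Qed.

Lemma enorm_le_sqdist x y i : enorm (x i - y i) <= Num.sqrt (sqdist x y).
Proof.
rewrite enormE ler_sqrt ?sqdist_ge0 // /sqdist (bigD1 i) //= lerDl.
by apply: sumr_ge0 => k _; exact: dotxx_ge0.
Qed.

Lemma Dobj_lipschitz x y : `|Dobj x - Dobj y| <= 2 * m%:R * Num.sqrt (sqdist x y).
Proof.
rewrite /Dobj -sumrB; apply: le_trans (ler_norm_sum _ _ _) _.
have -> : 2 * m%:R * Num.sqrt (sqdist x y) = \sum_(i < m) 2 * Num.sqrt (sqdist x y).
  by rewrite sumr_const card_ord -mulr_natr; ring.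
apply: ler_sum => i _; apply: le_trans (ler_enorm_dist _ _) _.
have -> : x i - x (ordS i) - (y i - y (ordS i)) = (x i - y i) - (x (ordS i) - y (ordS i)).
  by rewrite !opprD !opprK addrACA.
apply: le_trans (ler_enormD _ _) _; rewrite enormN.
by have := enorm_le_sqdist x y i; have := enorm_le_sqdist x y (ordS i); lra.
Qed.

Lemma sqrt_le_eps (e s : R) : 0 < e -> s <= e ^+ 2 -> Num.sqrt s <= e.
Proof.
move=> e0 se; rewrite -[leRHS](ger0_norm (ltW e0)) -sqrtr_sqr.
by rewrite ler_sqrt // exprn_ge0 // ltW.
Qed.

Lemma sqdist_cvg0_cvg c y :
  sqdist (c l) y @[l --> \oo] --> 0 -> forall i, c l i @[l --> \oo] --> y i.
Proof.
move=> /cvgrPdist_le c_cvg i; apply/cvgrPdist_le => e e0.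
have [N _ cN] := c_cvg (e ^+ 2) (exprn_gt0 _ e0).
exists N => // l /= Nl; move: (cN l Nl); rewrite /= sub0r normrN ger0_norm ?sqdist_ge0 //.
move=> /(sqrt_le_eps e0); apply: le_trans; apply: le_trans (mx_norm_le_enorm _) _.
by rewrite enorm_distC enorm_le_sqdist.
Qed.

Lemma sqdist_cvg0_Dobj c y :
  sqdist (c l) y @[l --> \oo] --> 0 -> Dobj (c l) @[l --> \oo] --> Dobj y.
Proof.
move=> /cvgrPdist_le c_cvg; apply/cvgrPdist_le => e e0.
have e'0 : 0 < e / (2 * m%:R + 1) by rewrite divr_gt0 //; lra.
have [N _ cN] := c_cvg _ (exprn_gt0 2 e'0).
exists N => // l /= Nl; move: (cN l Nl); rewrite /= sub0r normrN ger0_norm ?sqdist_ge0 //.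
move=> /(sqrt_le_eps e'0) le_e'.
rewrite distrC; apply: le_trans (Dobj_lipschitz _ _) _.
have m0 : 0 <= 2 * m%:R :> R by rewrite mulr_ge0.
apply: le_trans (ler_wpM2l m0 le_e') _.
by rewrite mulrA ler_pdivrMr; nra.
Qed.

Lemma coord_cvg_sqdist c y :
  (forall i j, c l i ord0 j @[l --> \oo] --> y i ord0 j) -> sqdist (c l) y @[l --> \oo] --> 0.
Proof.
move=> c_cvg; apply/cvgrPdist_le => e e0.
set d := Num.min 1 (e / ((m * n)%:R + 1)).
have d0 : 0 < d by rewrite lt_min ltr01 divr_gt0 //; lra.
have d1 : d <= 1 by rewrite ge_min lexx.
have de : d <= e / ((m * n)%:R + 1) by rewrite ge_min lexx orbT.
have : \forall l \near \oo, forall p : 'I_m * 'I_n, `|y p.1 ord0 p.2 - c l p.1 ord0 p.2| <= d.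
  by apply: filter_forall => p; exact: (cvgrPdist_le _ _).1 (c_cvg p.1 p.2) d d0.
case=> N _ cN; exists N => // l /= Nl; rewrite sub0r normrN ger0_norm ?sqdist_ge0 //.
apply: le_trans (_ : \sum_(i < m) \sum_(j < n) d <= _).
  apply: ler_sum => i _; apply: ler_sum => j _.
  have := cN l Nl (i, j); rewrite /= !mxE distrC -expr2 -real_normK ?num_real // => cd.
  by have := normr_ge0 (c l i ord0 j - y i ord0 j); nra.
rewrite !sumr_const !card_ord -mulrnA -mulr_natr mulnC.
have k0 : 0 <= (m * n)%:R :> R by [].
apply: le_trans (ler_wpM2r k0 de) _.
by rewrite mulrAC ler_pdivrMr; nra.
Qed.

Lemma tuple_bolzano_weierstrass c : (forall i, exists M, forall l, enorm (c l i) <= M) ->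
  exists f y, increasing_seq f /\ sqdist (c (f l)) y @[l --> \oo] --> 0.
Proof.
move=> c_bounded.
have coord_bounded (p : 'I_m * 'I_n) : exists M, forall l, `|c l p.1 ord0 p.2| <= M.
  have [M HM] := c_bounded p.1; exists M => l.
  exact: le_trans (coord_le_enorm _ _) (HM l).
have [f [f_incr f_cvg]] := bolzano_weierstrass_seq (enum {: 'I_m * 'I_n}) coord_bounded.
exists f, (fun i => \row_j limn (fun l => c (f l) i ord0 j)); split => //.
apply: coord_cvg_sqdist => i j; rewrite mxE.
exact: (f_cvg (i, j) (mem_enum _ _)).
Qed.

End CyclicObjective.

Section ProjectedSubgradient.
Variables (R : realType) (n m : nat) (C : 'I_m -> set 'rV[R]_n) (alpha : nat -> R)
  (a : nat -> 'I_m -> 'rV[R]_n).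
Hypothesis m_gt1 : (1 < m)%N.
Hypothesis C_neq0 : forall i, C i !=set0.
Hypothesis C_closed : forall i, closed (C i).
Hypothesis C_convex : forall i, convex_set (C i).
Hypothesis C_disjoint : forall i j, i != j -> C i `&` C j = set0.
Hypothesis C_coercive : (forall i, ebounded (C i)) \/
   (forall j, ~ ebounded (C j) ->
      forall s : nat -> 'rV[R]_n, (forall k, C j (s k)) ->
        (fun k => enorm (s k)) @ \oo --> +oo ->
        (fun k => dist_set (C (ord_pred j)) (s k)) @ \oo --> +oo \/
        (fun k => dist_set (C (ordS j)) (s k)) @ \oo --> +oo).
Hypothesis alpha_gt0 : forall k, 0 < alpha k.
Hypothesis series_alpha_dvg : series alpha @ \oo --> +oo.
Hypothesis series_alpha2_cvg : cvg (series (fun k => alpha k ^+ 2) @ \oo).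
Hypothesis a0_feasible : forall i, C i (a 0%N i).
Hypothesis a_proj : forall k i, is_proj (C i) (a k i - alpha k *: gdir (a k) i) (a k.+1 i).

Definition feasible (b : 'I_m -> 'rV[R]_n) := forall i, C i (b i).

Definition optimal (b : 'I_m -> 'rV[R]_n) :=
  feasible b /\ forall c, feasible c -> Dobj b <= Dobj c.

Lemma iterate_feasible k : feasible (a k).
Proof. by case: k => [|k] i; [exact: a0_feasible | case: (@a_proj k i)]. Qed.

Lemma feasible_neq b i j : feasible b -> i != j -> b i - b j != 0.
Proof.
move=> b_feas ij; rewrite subr_eq0; apply/eqP => bij.
have : (C i `&` C j) (b i) by split; rewrite // bij.
by rewrite C_disjoint.
Qed.

(* Nonexpansiveness of the projection, [|g_i|^2 <= 4] and the subgradient inequality. *)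
Lemma sqdist_step k b : feasible b ->
  sqdist (a k.+1) b <=
    sqdist (a k) b - 2 * alpha k * (Dobj (a k) - Dobj b) + 4 * m%:R * alpha k ^+ 2.
Proof.
move=> b_feas.
have neqS i : a k i - a k (ordS i) != 0.
  by apply: feasible_neq (iterate_feasible k) _; rewrite eq_sym ordS_neq.
have neqP i : a k i - a k (ord_pred i) != 0.
  by apply: feasible_neq (iterate_feasible k) _; rewrite eq_sym ord_pred_neq.
have step_i i : dot (a k.+1 i - b i) (a k.+1 i - b i) <=
    dot (a k i - b i) (a k i - b i) - 2 * alpha k * dot (gdir (a k) i) (a k i - b i)
    + alpha k ^+ 2 * 4.
  apply: le_trans (is_proj_contract (@C_convex i) (@a_proj k i) (b_feas i)) _.
  rewrite addrAC dot_subZ.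
  have : alpha k ^+ 2 * dot (gdir (a k) i) (gdir (a k) i) <= alpha k ^+ 2 * 4.
    by rewrite ler_pM2l ?exprn_gt0 // dot_gdir_le4.
  lra.
rewrite /sqdist; apply: le_trans (ler_sum _ (fun i _ => step_i i)) _.
rewrite !big_split /= sumrN -mulr_sumr sumr_const card_ord.
have := Dobj_subgradient b neqS; have := alpha_gt0 k.
rewrite -mulr_natl; nra.
Qed.

Lemma sqdist_telescope b : feasible b -> forall j N, (j <= N)%N ->
  sqdist (a N) b + 2 * \sum_(j <= k < N) alpha k * (Dobj (a k) - Dobj b)
  <= sqdist (a j) b + 4 * m%:R * \sum_(j <= k < N) alpha k ^+ 2.
Proof.
move=> b_feas j N /subnKC <-; elim: (N - j)%N => [|d IH].
  by rewrite addn0 !big_geq //; lra.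
rewrite addnS !big_nat_recr ?leq_addr //=.
by have := sqdist_step (j + d) b_feas; lra.
Qed.

Let sq_tail j := limn (series (fun k => alpha k ^+ 2)) - series (fun k => alpha k ^+ 2) j.

Lemma sum_sq_le_tail j N : (j <= N)%N -> \sum_(j <= k < N) alpha k ^+ 2 <= sq_tail j.
Proof.
move=> jN; rewrite -sub_series_geq // lerB //.
apply: nondecreasing_cvgn_le => //.
by apply: nondecreasing_series => k _ _; exact: sqr_ge0.
Qed.

Lemma sq_tail_small e : 0 < e -> exists j0, forall j, (j0 <= j)%N -> sq_tail j <= e.
Proof.
move=> e0; have /cvgrPdist_le /(_ e e0) [N _ HN] := series_alpha2_cvg.
by exists N => j Nj; have := HN j Nj; rewrite /= ler_norml /sq_tail; lra.
Qed.

Lemma sqdist_quasi_fejer b : optimal b -> forall j N, (j <= N)%N ->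
  sqdist (a N) b <= sqdist (a j) b + 4 * m%:R * sq_tail j.
Proof.
move=> [b_feas b_min] j N jN.
have := sqdist_telescope b_feas jN.
have : 0 <= \sum_(j <= k < N) alpha k * (Dobj (a k) - Dobj b).
  apply: sumr_ge0 => k _; rewrite mulr_ge0 ?(ltW (alpha_gt0 k)) //.
  by rewrite subr_ge0 b_min //; exact: iterate_feasible.
have m0 : 0 <= 4 * m%:R :> R by rewrite mulr_ge0.
have := ler_wpM2l m0 (sum_sq_le_tail jN).
lra.
Qed.

Lemma iterate_bounded b : optimal b -> forall i, exists M, forall k, enorm (a k i) <= M.
Proof.
move=> b_opt i; set S := sqdist (a 0%N) b + 4 * m%:R * sq_tail 0.
exists (enorm (b i) + Num.sqrt S) => k.
have le_S := sqdist_quasi_fejer b_opt (leq0n k).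
have : enorm (a k i - b i) <= Num.sqrt S.
  apply: le_trans (enorm_le_sqdist _ _ i) _.
  by rewrite ler_sqrt // (le_trans (sqdist_ge0 _ _) le_S).
by have := ler_enormD (a k i - b i) (b i); rewrite subrK; lra.
Qed.

Lemma dist_set_next_le x i : feasible x -> dist_set (C (ordS i)) (x i) <= Dobj x.
Proof. by move=> x_feas; apply: le_trans (dist_set_le _ (x_feas _)) (enorm_le_Dobj _ _). Qed.

Lemma dist_set_prev_le x i : feasible x -> dist_set (C (ord_pred i)) (x i) <= Dobj x.
Proof.
move=> x_feas; apply: le_trans (dist_set_le _ (x_feas _)) _.
by rewrite enorm_distC; have := enorm_le_Dobj x (ord_pred i); rewrite ord_predK.
Qed.

(* A bounded-cost sequence cannot escape to infinity in [C i]: both neighbours of its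
   [i]-th point stay within distance [B] of it. *)
Lemma feasible_bounded (c : nat -> 'I_m -> 'rV[R]_n) B :
  (forall l, feasible (c l)) -> (forall l, Dobj (c l) <= B) ->
  forall i, exists M, forall l, enorm (c l i) <= M.
Proof.
move=> c_feas c_le i.
case: C_coercive => [C_bounded|C_dvg].
  by have [M HM] := C_bounded i; exists M => l; exact/HM/c_feas.
apply: contrapT => c_unbounded.
have Ci_unbounded : ~ ebounded (C i).
  by move=> [M HM]; apply: c_unbounded; exists M => l; exact/HM/c_feas.
have [psi psi_dvg] := not_ubounded_cvgry_comp c_unbounded.
have [/cvgryPge dvg|/cvgryPge dvg] :=
  C_dvg i Ci_unbounded _ (fun k => c_feas (psi k) i) psi_dvg.
- have [K _ HK] := dvg (B + 1); have := HK K (leqnn K).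
  by have := le_trans (dist_set_prev_le i (c_feas (psi K))) (c_le _); lra.
- have [K _ HK] := dvg (B + 1); have := HK K (leqnn K).
  by have := le_trans (dist_set_next_le i (c_feas (psi K))) (c_le _); lra.
Qed.

Lemma feasible_limit_point (c : nat -> 'I_m -> 'rV[R]_n) v :
  (forall l, feasible (c l)) -> (forall i, exists M, forall l, enorm (c l i) <= M) ->
  (forall l, Dobj (c l) <= v + l.+1%:R^-1) ->
  exists f y, [/\ increasing_seq f, sqdist (c (f l)) y @[l --> \oo] --> 0,
                  feasible y & Dobj y <= v].
Proof.
move=> c_feas c_bounded c_le.
have [f [y [f_incr c_cvg]]] := tuple_bolzano_weierstrass c_bounded.
exists f, y; split => //.
  move=> i; have ci_cvg := sqdist_cvg0_cvg c_cvg (i := i).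
  apply: (closed_cvg (C i) (@C_closed i) _ (y i) ci_cvg).
  by apply: nearW => l; exact: c_feas.
have D_cvg := sqdist_cvg0_Dobj c_cvg.
apply/ler_addgt0Pr => e e0; rewrite -(cvg_lim _ D_cvg) //.
apply: limr_le; first exact: cvgP D_cvg.
apply: filterS (near_infty_natSinv_lt (PosNum e0)) => l /ltW /= le_e.
apply: le_trans (c_le (f l)) _; rewrite lerD2l; apply: le_trans le_e.
by rewrite lef_pV2 ?posrE ?ltr0Sn // ler_nat ltnS leq_increasing_seq.
Qed.

Lemma exists_optimal : exists b, optimal b.
Proof.
pose P := [set Dobj c | c in feasible].
have [b0 b0_feas] := choice C_neq0.
have P_lb : has_lbound P by exists 0 => _ [c _ <-]; exact: Dobj_ge0.
have P_inf : has_inf P by split => //; exists (Dobj b0), b0.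
have /choice [c c_spec] : forall l : nat, exists c, feasible c /\ Dobj c <= inf P + l.+1%:R^-1.
  move=> l; have l_gt0 : 0 < l.+1%:R^-1 :> R by rewrite invr_gt0.
  have [_ [c c_feas <-] lt_c] := inf_adherent l_gt0 P_inf.
  by exists c; split => //; exact: ltW.
have c_le l : Dobj (c l) <= inf P + 1.
  by apply: le_trans (c_spec l).2 _; rewrite lerD2l invf_le1 ?ltr0Sn // ler1n.
have c_bounded := feasible_bounded (fun l => (c_spec l).1) c_le.
have [_ [y [_ _ y_feas Dy]]] := feasible_limit_point (fun l => (c_spec l).1) c_bounded
  (fun l => (c_spec l).2).
by exists y; split => // b b_feas; apply: le_trans Dy (ge_inf P_lb _); exists b.
Qed.

(* Otherwise [sqdist (a k) b] would drop by at least [2 e alpha_k - 4 m alpha_k^2] at every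
   step from [j] on, which is impossible as [sum alpha_k = +oo] and [sum alpha_k^2 < +oo]. *)
Lemma Dobj_iterate_le_often b e j : optimal b -> 0 < e ->
  exists2 k, (j <= k)%N & Dobj (a k) <= Dobj b + e.
Proof.
move=> [b_feas _] e0; apply: contrapT => never.
have D_gt k : (j <= k)%N -> Dobj b + e < Dobj (a k).
  by move=> jk; rewrite ltNge; apply/negP => le_k; apply: never; exists k.
set Q := sqdist (a j) b + 4 * m%:R * sq_tail j.
have /cvgryPge /(_ (series alpha j + (Q + 1) / (2 * e))) [K _ HK] := series_alpha_dvg.
set N := maxn K j; have jN : (j <= N)%N by exact: leq_maxr.
have alpha_N := HK N (leq_maxl _ _).
have := sqdist_telescope b_feas jN.
have : e * (series alpha N - series alpha j) <=
    \sum_(j <= k < N) alpha k * (Dobj (a k) - Dobj b).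
  rewrite sub_series_geq // mulr_sumr; apply: ler_sum_nat => k /andP [jk _].
  by rewrite mulrC ler_pM2l //; have := D_gt k jk; lra.
have m0 : 0 <= 4 * m%:R :> R by rewrite mulr_ge0.
have := ler_wpM2l m0 (sum_sq_le_tail jN).
have := sqdist_ge0 (a N) b.
have : (Q + 1) / (2 * e) * (2 * e) = Q + 1 by rewrite divfK // mulf_neq0 // gt_eqF.
move: alpha_N; rewrite /Q.
move: (series alpha N) (series alpha j) ((_ + 1) / (2 * e)) => sN sj z.
nra.
Qed.

Lemma iterate_sqdist_cvg0 y : optimal y ->
  (forall e j, 0 < e -> exists2 k, (j <= k)%N & sqdist (a k) y <= e) ->
  sqdist (a N) y @[N --> \oo] --> 0.
Proof.
move=> y_opt y_often; apply/cvgrPdist_le => e e0.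
have m0 : 0 <= m%:R :> R by [].
have e'0 : 0 < e / (8 * m%:R + 1) by rewrite divr_gt0 //; lra.
have [j0 tail_le] := sq_tail_small e'0.
have e2 : 0 < e / 2 by rewrite divr_gt0.
have [k j0k small_k] := y_often (e / 2) j0 e2.
exists k => // N /= kN; rewrite sub0r normrN ger0_norm ?sqdist_ge0 //.
have := sqdist_quasi_fejer y_opt kN; have := tail_le k j0k.
have : 4 * m%:R * (e / (8 * m%:R + 1)) <= e / 2.
  by rewrite mulrA ler_pdivrMr ?ltr_wpDl ?mulr_ge0 //; nra.
move: small_k; move: (sq_tail k) => t; nra.
Qed.

Lemma projected_subgradient_cvg : exists astar : 'I_m -> 'rV[R]_n,
  [/\ optimal astar, forall i, a k i @[k --> \oo] --> astar i &
      Dobj (a k) @[k --> \oo] --> Dobj astar].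
Proof.
have [b b_opt] := exists_optimal.
have /choice [phi phiP] : forall l, exists k, (l <= k)%N /\ Dobj (a k) <= Dobj b + l.+1%:R^-1.
  move=> l; have l_gt0 : 0 < l.+1%:R^-1 :> R by rewrite invr_gt0.
  have [k lk le_k] := Dobj_iterate_le_often l b_opt l_gt0.
  by exists k.
have phi_bounded i : exists M, forall l, enorm (a (phi l) i) <= M.
  by have [M HM] := iterate_bounded b_opt i; exists M.
have [f [y [f_incr cvg_y y_feas Dy]]] :=
  feasible_limit_point (fun l => iterate_feasible (phi l)) phi_bounded (fun l => (phiP l).2).
have y_opt : optimal y by split => // c c_feas; exact: le_trans Dy (b_opt.2 c c_feas).
have a_cvg : sqdist (a N) y @[N --> \oo] --> 0.
  apply: (iterate_sqdist_cvg0 y_opt) => e j e0.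
  have /cvgrPdist_le /(_ e e0) [L _ HL] := cvg_y.
  set l := maxn j L; exists (phi (f l)).
    apply: leq_trans (phiP _).1; apply: leq_trans (leq_increasing_seq f_incr l).
    exact: leq_maxl.
  have := HL l (leq_maxr _ _); rewrite /= sub0r normrN ger0_norm //; exact: sqdist_ge0.
by exists y; split => //; [exact: sqdist_cvg0_cvg | exact: sqdist_cvg0_Dobj].
Qed.

End ProjectedSubgradient.

Theorem mainTheorem6 (R : realType) (n m : nat) (C : 'I_m -> set 'rV[R]_n)
  (alpha : nat -> R) (a : nat -> 'I_m -> 'rV[R]_n) :
  (2 <= m)%N ->
  (forall i, C i !=set0) ->
  (forall i, closed (C i)) ->
  (forall i, convex_set (C i)) ->
  (forall i j, i != j -> C i `&` C j = set0) ->
  ((forall i, ebounded (C i)) \/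
   (forall j, ~ ebounded (C j) ->
      forall s : nat -> 'rV[R]_n, (forall k, C j (s k)) ->
        (fun k => enorm (s k)) @ \oo --> +oo ->
        (fun k => dist_set (C (ord_pred j)) (s k)) @ \oo --> +oo \/
        (fun k => dist_set (C (ordS j)) (s k)) @ \oo --> +oo)) ->
  (forall k, 0 < alpha k) ->
  series alpha @ \oo --> +oo ->
  cvg (series (fun k => alpha k ^+ 2) @ \oo) ->
  (forall i, C i (a 0%N i)) ->
  (forall k i, is_proj (C i) (a k i - alpha k *: gdir (a k) i) (a k.+1 i)) ->
  exists astar : 'I_m -> 'rV[R]_n,
    [/\ (forall i, C i (astar i)),
        (forall b : 'I_m -> 'rV[R]_n, (forall i, C i (b i)) ->
           Dobj astar <= Dobj b),
        (forall i, a k i @[k --> \oo] --> astar i) &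
        (fun k => Dobj (a k)) @ \oo --> Dobj astar].
Proof.
move=> m_gt1 C_neq0 C_closed C_convex C_disjoint C_coercive alpha_gt0 alpha_dvg alpha2_cvg
  a0_feasible a_proj.
have [astar [[astar_feas astar_min] a_cvg D_cvg]] := projected_subgradient_cvg m_gt1 C_neq0
  C_closed C_convex C_disjoint C_coercive alpha_gt0 alpha_dvg alpha2_cvg a0_feasible a_proj.
by exists astar.
Qed.
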